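(* Let $k$ be an infinite field. For each $i\in\mathbb{Z}$ let $M_i$ and $N_i$ be square matrices over $k$ of trace zero, of sizes $m_i$ and $n_i$ respectively. Then one can choose square matrices $p_i,q_i$ (of size $m_i$) and $s_i,t_i$ (of size $n_i$) over $k$, for all $i\in\mathbb{Z}$, such that for every $i$: (A1) $M_i=p_iq_i-q_ip_i$; (A2) $N_i=s_it_i-t_is_i$; (A3) $p_i\otimes I_{n_i}-I_{m_i}\otimes s_i^T$ is invertible; (A4) $q_{i+1}\otimes I_{m_i}-I_{m_{i+1}}\otimes q_i^T$ is invertible; (A5) $s_i\otimes I_{m_{i+1}}-I_{n_i}\otimes p_{i+1}^T$ is invertible.
   Context: $I_k$ is the $k\times k$ identity matrix, $\otimes$ is the Kronecker (tensor) product of matrices, $M^T$ is the transpose. By convention the empty $0\times 0$ matrix is invertible (sizes $m_i,n_i$ may be $0$). *)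

From mathcomp Require Import all_boot all_algebra.
From mathcomp Require Export mxtens.
Set Implicit Arguments. Unset Strict Implicit. Unset Printing Implicit Defensive.
Import GRing.Theory.
Local Open Scope ring_scope.

Definition infinite_type (T : eqType) : Prop :=
  forall s : seq T, exists x : T, x \notin s.

(* Every trace-zero matrix M is a commutator [P, Q] (Shoda). If M is not
   scalar, conjugating by transvections makes its (0,0) entry vanish, so
   M = [[0, u], [v, C]] with tr C = 0; by induction C = [P, Q], and choosing a
   with B = P + a invertible, M = [diag(0, B), [[0, -u B^-1], [B^-1 v, Q]]].
   A nonzero scalar matrix of size n has trace zero only if n = 0 in k, and
   then it is a multiple of [d/dx, x] = 1 acting on k[x]/(x^n).

   Adding scalars to p and q does not change [p, q], while adding a to p and
   b to s shifts p (x) I - I (x) s^T by (a - b) I. Over an infinite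
   field a matrix A + a I is invertible for all but finitely many a, so the
   shifts needed for (A3)-(A5) can be chosen one index at a time; the
   conditions coupling i and i + 1 only constrain successive differences of
   the shifts, and any sequence on Z is a sequence of successive differences. *)

From mathcomp Require Import all_boot all_algebra.
From mathcomp Require Import mxtens ring.
Set Implicit Arguments. Unset Strict Implicit. Unset Printing Implicit Defensive.
Import GRing.Theory.
Local Open Scope ring_scope.

Lemma dep_choice (I : Type) (T : I -> choiceType) (P : forall i, pred (T i)) :
  (forall i, exists x, P i x) -> exists f : forall i, T i, forall i, P i (f i).
Proof. by move=> exP; exists (fun i => xchoose (exP i)) => i; apply: xchooseP. Qed.

Lemma antidiff_int (V : zmodType) (d : int -> V) :
  exists x : int -> V, forall i, x (i + 1) - x i = d i.
Proof.
exists (fun i => match i with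
  | Posz n => \sum_(j < n) d j
  | Negz n => - \sum_(j < n.+1) d (Negz j) end).
case=> [n | [|n]].
- by rewrite -PoszD addn1 big_ord_recr /= addrAC subrr add0r.
- by rewrite /= big_ord0 big_ord1 opprK add0r.
- have -> : Negz n.+1 + 1 = Negz n by rewrite !NegzE -addn1 PoszD opprD addrNK.
  by rewrite (big_ord_recr n.+1) /= opprK addKr.
Qed.

Section InfiniteField.
Variables (k : fieldType) (k_inf : infinite_type k).

Lemma infinite_uniq_seq n : exists2 s : seq k, uniq s & size s = n.
Proof.
elim: n => [|n [s uniq_s size_s]]; first by exists [::].
have [x x_notin_s] := k_inf s.
by exists (x :: s); rewrite /= ?x_notin_s ?size_s.
Qed.

Lemma exists_nonroot (p : {poly k}) : p != 0 -> exists x, ~~ root p x.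
Proof.
move=> p_neq0; have [s uniq_s size_s] := infinite_uniq_seq (size p).
have : ~~ all (root p) s.
  by apply/negP=> /(max_poly_roots p_neq0)/(_ uniq_s); rewrite size_s ltnn.
by case/allPn => x _ not_root; exists x.
Qed.

Lemma exists_unit_scalar_shift n (A : 'M[k]_n) :
  exists a : k, A + a%:M \in unitmx.
Proof.
have [x not_root] := exists_nonroot (monic_neq0 (char_poly_monic A)).
exists (- x); rewrite -row_free_unit -kermx_eq0 raddfN /= -/(eigenspace A x).
by move: not_root; rewrite -eigenvalue_root_char /eigenvalue negbK.
Qed.

Lemma unit_scalar_shift_family (I : Type) (d : I -> nat) (A : forall i, 'M[k]_(d i)) :
  exists a : I -> k, forall i, A i + (a i)%:M \in unitmx.
Proof. exact: (@dep_choice I (fun=> k) _ (fun i => exists_unit_scalar_shift (A i))). Qed.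

End InfiniteField.

Section Commutator.
Variable R : pzRingType.
Definition commmx n (A B : 'M[R]_n) := A *m B - B *m A.

Lemma sum_nat_delta N a (f : nat -> R) :
  \sum_(l < N) ((l : nat) == a)%:R * f l = (a < N)%:R * f a.
Proof.
case: ltnP => [lt_aN | le_Na].
  rewrite (bigD1 (Ordinal lt_aN)) //= eqxx big1 ?addr0 // => l.
  by rewrite -val_eqE /= => /negPf->; rewrite mul0r.
rewrite big1 ?mul0r // => l _.
by rewrite ltn_eqF ?mul0r // (leq_trans (ltn_ord l)).
Qed.

(* D and X act as d/dx and multiplication by x on R[x]/(x^(n+1)), where
   d/dx is well defined because (n+1) = 0. *)
Lemma commmx_eq1 n : n.+1%:R = 0 :> R -> exists D X : 'M[R]_n.+1, commmx D X = 1%:M.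
Proof.
move=> char_n.
pose D : 'M[R]_n.+1 := \matrix_(i, j) (((j : nat) == i.+1)%:R * i.+1%:R).
pose X : 'M[R]_n.+1 := \matrix_(i, j) ((i : nat) == j.+1)%:R.
have DX (r s : 'I_n.+1) : (D *m X) r s = (r < n)%:R * (r.+1%:R * (r == s :> nat)%:R).
  rewrite mxE; under eq_bigr do rewrite !mxE -mulrA.
  by rewrite (sum_nat_delta _ _ (fun l => r.+1%:R * (l == s.+1)%:R)) ltnS eqSS.
have XD (r s : 'I_n.+1) : (X *m D) r s = (r == s :> nat)%:R * r%:R.
  rewrite mxE; case: r => [[|r] lt_r] /=.
    by rewrite mulr0 big1 // => l _; rewrite !mxE mul0r.
  under eq_bigr do rewrite !mxE /= eqSS eq_sym.
  rewrite (sum_nat_delta _ _ (fun l => (s == l.+1 :> nat)%:R * l.+1%:R)) ltnW //.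
  by rewrite mul1r eq_sym.
exists D, X; apply/matrixP=> r s.
have -> : commmx D X r s = (D *m X) r s - (X *m D) r s by rewrite !mxE.
rewrite DX XD !mxE; case: (eqVneq r s) => [<- | r_neq_s]; last first.
  by have /negPf-> : (r : nat) != s by []; rewrite !mulr0 mul0r subr0.
rewrite eqxx !mulr1 mul1r; case: ltnP => [_ | le_nr].
  by rewrite mul1r -natr1 addrAC subrr add0r.
have -> : (r : nat) = n by apply/eqP; rewrite eqn_leq le_nr -ltnS ltn_ord.
by rewrite mul0r sub0r; apply/esym/eqP; rewrite -addr_eq0 nat1r char_n.
Qed.

Lemma commmx_block_diag0 n (B : 'M[R]_n) x y C :
  commmx (block_mx 0 0 0 B : 'M_(1 + n)) (block_mx 0 x y C)
  = block_mx 0 (- (x *m B)) (B *m y) (commmx B C).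
Proof.
rewrite /commmx !mulmx_block !mulmx0 !mul0mx !addr0 !add0r.
by rewrite opp_block_mx add_block_mx !oppr0 !addr0 add0r.
Qed.

End Commutator.

Section ScalarShift.
Variable R : comPzRingType.

Lemma commmxDl_scalar n (A B : 'M[R]_n) a : commmx (A + a%:M) B = commmx A B.
Proof.
by rewrite /commmx mulmxDl mulmxDr scalar_mxC [B *m A + _]addrC addrKA.
Qed.

Lemma commmxDr_scalar n (A B : 'M[R]_n) b : commmx A (B + b%:M) = commmx A B.
Proof. by rewrite /commmx mulmxDl mulmxDr scalar_mxC opprD addrACA subrr addr0. Qed.

Definition sylvester_mx m n (A : 'M[R]_m) (B : 'M[R]_n) : 'M[R]_(m * n) :=
  A *t 1%:M - 1%:M *t B^T.

Lemma tensmxDl m n p q (A B : 'M[R]_(m, n)) (C : 'M[R]_(p, q)) :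
  (A + B) *t C = A *t C + B *t C.
Proof. by apply/matrixP=> i j; rewrite !mxE mulrDl. Qed.

Lemma tensmxDr m n p q (A : 'M[R]_(m, n)) (B C : 'M[R]_(p, q)) :
  A *t (B + C) = A *t B + A *t C.
Proof. by apply/matrixP=> i j; rewrite !mxE mulrDr. Qed.

Lemma tens_scalar_mx_scalar m n (a b : R) :
  (a%:M : 'M_m) *t (b%:M : 'M_n) = (a * b)%:M.
Proof.
apply/matrixP=> i j.
case: (mxtens_indexP i) => i0 i1; case: (mxtens_indexP j) => j0 j1.
rewrite tensmxE !mxE (can_eq (@mxtens_indexK _ _)) xpair_eqE.
by rewrite mulrnAl mulrnAr -mulrnA mulnC -mulnb.
Qed.

Lemma sylvester_mxD_scalar m n (A : 'M[R]_m) (B : 'M[R]_n) a b :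
  sylvester_mx (A + a%:M) (B + b%:M) = sylvester_mx A B + (a - b)%:M.
Proof.
rewrite /sylvester_mx linearD /= tr_scalar_mx tensmxDl tensmxDr.
by rewrite !tens_scalar_mx_scalar mulr1 mul1r raddfB /= opprD addrACA.
Qed.

End ScalarShift.

Section Transvection.
Variables (k : fieldType) (n : nat).
Implicit Types (M : 'M[k]_n) (i j : 'I_n) (t : k).

Lemma mul_delta_mxE m p (i : 'I_m) j (M : 'M[k]_(n, p)) :
  delta_mx i j *m M = \matrix_(r, s) ((r == i)%:R * M j s).
Proof.
apply/matrixP=> r s; rewrite !mxE (bigD1 j) //= big1 ?addr0 => [|l /negPf l_neq_j].
  by rewrite !mxE eqxx andbT.
by rewrite !mxE l_neq_j andbF mul0r.
Qed.

Lemma mul_mx_deltaE m p i (j : 'I_p) (M : 'M[k]_(m, n)) :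
  M *m delta_mx i j = \matrix_(r, s) (M r i * (s == j)%:R).
Proof.
apply/matrixP=> r s; rewrite !mxE (bigD1 i) //= big1 ?addr0 => [|l /negPf l_neq_i].
  by rewrite !mxE eqxx.
by rewrite !mxE l_neq_i mulr0.
Qed.

Definition transvection i j t : 'M[k]_n := 1%:M + t *: delta_mx i j.

Lemma transvectionN i j t : i != j ->
  transvection i j t *m transvection i j (- t) = 1%:M.
Proof.
move=> i_neq_j; rewrite /transvection mulmxDl mul1mx mulmxDr mulmx1.
rewrite -scalemxAl -scalemxAr mul_delta_mx_0 1?eq_sym // !scaler0 addr0.
by rewrite scaleNr subrK.
Qed.

Lemma transvection_unit i j t : i != j -> transvection i j t \in unitmx.
Proof. by move=> /(transvectionN t)/mulmx1_unit[]. Qed.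

Lemma invmx_transvection i j t : i != j ->
  invmx (transvection i j t) = transvection i j (- t).
Proof.
move=> i_neq_j; rewrite -[invmx _]mulmx1 -(transvectionN t i_neq_j).
by rewrite mulmxA mulVmx ?mul1mx ?transvection_unit.
Qed.

Lemma conjmx_transvectionE i j t M r s : i != j ->
  conjmx (transvection i j t) M r s =
    M r s + t * ((r == i)%:R * M j s - M r i * (s == j)%:R)
    - t ^+ 2 * ((r == i)%:R * M j i * (s == j)%:R).
Proof.
move=> i_neq_j; rewrite conjumx ?transvection_unit // invmx_transvection //.
rewrite /transvection mulmxDl mul1mx !mulmxDr !mulmx1 -!scalemxAr -scalemxAl.
rewrite mulmxDl -scalemxAl -mulmxA mul_mx_deltaE !mul_delta_mxE !mxE.
ring.
Qed.

End Transvection.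

Lemma commmx_conj (k : fieldType) n (V A B : 'M[k]_n) : V \in unitmx ->
  conjmx V (commmx A B) = commmx (conjmx V A) (conjmx V B).
Proof.
move=> V_unit; rewrite /commmx !conjumx //.
by rewrite mulmxBr mulmxBl !mulmxA !(mulmxKV V_unit).
Qed.

Lemma mxtrace_conjmx (k : fieldType) n (V M : 'M[k]_n) :
  V \in unitmx -> \tr (conjmx V M) = \tr M.
Proof. by move=> V_unit; rewrite conjumx // mxtrace_mulC mulmxA mulVmx ?mul1mx. Qed.

Section Corner.
Variables (k : fieldType) (n : nat).
Implicit Types M : 'M[k]_n.+1.

Definition corner0_similar M :=
  exists2 V : 'M_n.+1, V \in unitmx & conjmx V M 0 0 = 0.

Lemma corner0_similar_col M j : j != 0 -> M j 0 != 0 -> corner0_similar M.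
Proof.
move=> j_neq0 Mj0_neq0; have zero_neq_j : 0 != j by rewrite eq_sym.
exists (transvection 0 j (- (M 0 0 / M j 0))); first exact: transvection_unit.
rewrite conjmx_transvectionE // eqxx (negPf zero_neq_j) !mulr0 !subr0 mul1r.
by rewrite mulNr divfK // subrr.
Qed.

Lemma corner0_similar_row M j : j != 0 -> M 0 j != 0 -> corner0_similar M.
Proof.
move=> j_neq0 M0j_neq0.
exists (transvection j 0 (M 0 0 / M 0 j)); first exact: transvection_unit.
rewrite conjmx_transvectionE // eqxx eq_sym (negPf j_neq0) !mul0r mulr1 !mulr0.
by rewrite sub0r subr0 mulrN divfK // subrr.
Qed.

(* When row 0 and column 0 vanish off the diagonal, one transvection moves an
   entry witnessing that M is not scalar into column 0. *)
Lemma corner0_similar_nonscalar M : ~~ is_scalar_mx M -> corner0_similar M.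
Proof.
move=> M_nonscalar.
have [j /andP[j_neq0 Mj0_neq0] | col0] := pickP (fun j => (j != 0) && (M j 0 != 0)).
  exact: corner0_similar_col Mj0_neq0.
have [j /andP[j_neq0 M0j_neq0] | row0] := pickP (fun j => (j != 0) && (M 0 j != 0)).
  exact: corner0_similar_row M0j_neq0.
have {}col0 (j : 'I_n.+1) : j != 0 -> M j 0 = 0.
  by move=> j_neq0; apply/eqP; move: (col0 j); rewrite j_neq0 => /negbFE.
have {}row0 (j : 'I_n.+1) : j != 0 -> M 0 j = 0.
  by move=> j_neq0; apply/eqP; move: (row0 j); rewrite j_neq0 => /negbFE.
have [[r s] /= Mrs | M_scalar] :=
  pickP (fun rs : 'I_n.+1 * 'I_n.+1 => M rs.1 rs.2 != (M 0 0)%:M rs.1 rs.2); last first.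
  case/negP: M_nonscalar; apply/is_scalar_mxP; exists (M 0 0).
  by apply/matrixP=> r s; apply/eqP/negbFE/(M_scalar (r, s)).
rewrite mxE in Mrs.
have r_neq0 : r != 0.
  apply: contra Mrs => /eqP ->; have [-> | s_neq0] := eqVneq s 0; first by rewrite eqxx.
  by rewrite row0 // eq_sym (negPf s_neq0).
have s_neq0 : s != 0.
  apply: contra Mrs => /eqP ->; have [-> | _] := eqVneq r 0; first by rewrite eqxx.
  by rewrite col0.
have : conjmx (transvection s 0 1) M r 0 != 0.
  rewrite conjmx_transvectionE // (col0 r r_neq0) (row0 s s_neq0) eqxx.
  by rewrite add0r mul1r mulr1 !mulr0 mul0r mulr0 subr0 mulr_natl subr_eq0 eq_sym.
case/(corner0_similar_col r_neq0) => V V_unit V_corner.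
exists (V *m transvection s 0 1); first by rewrite unitmx_mul V_unit transvection_unit.
by rewrite conjuMumx ?transvection_unit.
Qed.

End Corner.

Section Shoda.
Variables (k : fieldType) (k_inf : infinite_type k).

Lemma scalar_mx_commmx n (a : k) :
  \tr (a%:M : 'M_n) = 0 -> exists P Q : 'M_n, a%:M = commmx P Q.
Proof.
case: n => [|n]; first by exists 0, 0; apply/matrixP=> -[].
rewrite mxtrace_scalar; have [-> _ | a_neq0 tr0] := eqVneq a 0.
  by exists 0, 0; rewrite /commmx mulmx0 subrr raddf0.
have char_n : n.+1%:R = 0 :> k.
  by move/eqP: tr0; rewrite -[a *+ _]mulr_natr mulf_eq0 (negPf a_neq0) => /eqP.
have [D [X DX1]] := commmx_eq1 char_n.
exists (a *: D), X.
by rewrite /commmx -scalemxAl -scalemxAr -scalerBr -/(commmx D X) DX1 scalemx1.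
Qed.

Lemma block_corner0_commmx n (u : 'rV[k]_n) (v : 'cV_n) (C : 'M_n) :
  (exists P Q, C = commmx P Q) ->
  exists P Q : 'M_(1 + n), block_mx 0 u v C = commmx P Q.
Proof.
case=> P [Q ->]; have [a Pa_unit] := exists_unit_scalar_shift k_inf P.
exists (block_mx 0 0 0 (P + a%:M)).
exists (block_mx 0 (- (u *m invmx (P + a%:M))) (invmx (P + a%:M) *m v) Q).
by rewrite commmx_block_diag0 commmxDl_scalar mulNmx opprK mulmxKV // mulKVmx.
Qed.

Theorem mxtrace0_commmx n (M : 'M[k]_n) : \tr M = 0 -> exists P Q, M = commmx P Q.
Proof.
elim: n M => [|n IH] M trM0; first by exists 0, 0; apply/matrixP=> -[].
have [/is_scalar_mxP[a M_a] | M_nonscalar] := boolP (is_scalar_mx M).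
  by rewrite M_a in trM0 *; apply: scalar_mx_commmx.
have [V V_unit corner0] := corner0_similar_nonscalar M_nonscalar.
suff [P [Q PQ]] : exists P Q, conjmx V M = commmx P Q.
  exists (conjmx (invmx V) P), (conjmx (invmx V) Q).
  by rewrite -commmx_conj ?unitmx_inv // -PQ conjmxK.
set N : 'M_(1 + n) := conjmx V M.
have ul0 : ulsubmx N = 0.
  apply/matrixP=> i j; rewrite !ord1 mxE [usubmx _ _ _]mxE [RHS]mxE -corner0.
  by rewrite (_ : lshift n 0 = 0) //; apply: val_inj.
have trN0 : \tr (drsubmx N) = 0.
  have := mxtrace_block (ulsubmx N) (ursubmx N) (dlsubmx N) (drsubmx N).
  by rewrite submxK ul0 mxtrace0 add0r => <-; rewrite mxtrace_conjmx.
by rewrite -[N]submxK ul0; apply: block_corner0_commmx; apply: IH.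
Qed.

Lemma mxtrace0_commmx_family (I : Type) (d : I -> nat) (A : forall i, 'M[k]_(d i)) :
  (forall i, \tr (A i) = 0) ->
  exists P Q : forall i, 'M[k]_(d i), forall i, A i = commmx (P i) (Q i).
Proof.
move=> trA0; pose T i : choiceType := ('M[k]_(d i) * 'M[k]_(d i))%type.
have exPQ i : exists PQ : T i, A i == commmx PQ.1 PQ.2.
  by have [P [Q ->]] := mxtrace0_commmx (trA0 i); exists (P, Q).
have [PQ PQ_spec] := dep_choice exPQ.
by exists (fun i => (PQ i).1), (fun i => (PQ i).2) => i; apply/eqP.
Qed.

End Shoda.

Theorem lemmaA (k : fieldType) (hk : infinite_type k)
  (m n : int -> nat)
  (M : forall i : int, 'M[k]_(m i)) (N : forall i : int, 'M[k]_(n i))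
  (hM : forall i, \tr (M i) = 0) (hN : forall i, \tr (N i) = 0) :
  exists (p q : forall i : int, 'M[k]_(m i)) (s t : forall i : int, 'M[k]_(n i)),
    forall i : int,
      [/\ M i = p i *m q i - q i *m p i,
          N i = s i *m t i - t i *m s i,
          (p i *t (1%:M : 'M[k]_(n i)) - (1%:M : 'M[k]_(m i)) *t (s i)^T) \in unitmx,
          (q (i + 1) *t (1%:M : 'M[k]_(m i)) - (1%:M : 'M[k]_(m (i + 1))) *t (q i)^T)
            \in unitmx
        & (s i *t (1%:M : 'M[k]_(m (i + 1))) - (1%:M : 'M[k]_(n i)) *t (p (i + 1))^T)
            \in unitmx].
Proof.
have [p0 [q0 Mpq]] := mxtrace0_commmx_family hk hM.
have [s0 [t0 Nst]] := mxtrace0_commmx_family hk hN.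
have [y unit3] := unit_scalar_shift_family hk (fun i => sylvester_mx (p0 i) (s0 i)).
have [d unit4] := unit_scalar_shift_family hk (fun i => sylvester_mx (q0 (i + 1)) (q0 i)).
have [e unit5] := unit_scalar_shift_family hk (fun i => sylvester_mx (s0 i) (p0 (i + 1))).
have [c dc] := antidiff_int d.
have [x dx] := antidiff_int (fun i => - (y i + e i)).
(* With p_i = p0_i + x_i and s_i = s0_i + x_i - y_i, (A3) only sees y_i. *)
exists (fun i => p0 i + (x i)%:M), (fun i => q0 i + (c i)%:M).
exists (fun i => s0 i + (x i - y i)%:M), t0 => i /=.
rewrite -!/(sylvester_mx _ _) !sylvester_mxD_scalar subKr dc.
have -> : x i - y i - x (i + 1) = e i by rewrite -(subrK (x i) (x (i + 1))) dx; ring.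
split; [| | exact: unit3 | exact: unit4 | exact: unit5].
- by rewrite Mpq -(commmxDl_scalar _ _ (x i)) -(commmxDr_scalar _ _ (c i)).
- by rewrite Nst -(commmxDl_scalar _ _ (x i - y i)).
Qed.
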